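(* For integers $k\ge1$ let $p_k=\int_{\mathbb R}\mathrm{sech}^k(x)\cos(x)\,dx$ and $q_k=\int_{\mathbb R}\mathrm{sech}^k(x)\log(\mathrm{sech}(x))\cos(x)\,dx$. Then \[ q_3=q_1-\tfrac12p_1,\qquad q_5=\tfrac56q_1-\tfrac{29}{72}p_1,\qquad q_7=\tfrac{13}{18}q_1-\tfrac{121}{360}p_1 . \] *)

From mathcomp Require Import all_boot all_order all_algebra.
From mathcomp Require Import all_classical all_reals all_analysis.
Set Implicit Arguments. Unset Strict Implicit. Unset Printing Implicit Defensive.
Import Order.TTheory GRing.Theory Num.Theory.
Local Open Scope ring_scope.
Local Open Scope classical_set_scope.

Definition sech (R : realType) (x : R) : R := 2 / (expR x + expR (- x)).

Definition p_ (R : realType) (k : nat) : R :=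
  \int[@lebesgue_measure R]_(x in [set: R]) (sech x ^+ k * cos x).

Definition q_ (R : realType) (k : nat) : R :=
  \int[@lebesgue_measure R]_(x in [set: R]) (sech x ^+ k * ln (sech x) * cos x).

From mathcomp Require Import all_boot all_order all_algebra.
From mathcomp Require Import all_classical all_reals all_analysis.
From mathcomp Require Import ring lra.
From mathcomp Require Import measurable_realfun.
Import Order.TTheory GRing.Theory Num.Theory.
Import numFieldNormedType.Exports.
Set Implicit Arguments.
Unset Strict Implicit.
Unset Printing Implicit Defensive.
Local Open Scope ring_scope.
Local Open Scope classical_set_scope.

(* If g and g' decay exponentially, (g' cos + g sin)' = (g'' + g) cos shows that
   the integral of (g'' + g) cos over R vanishes.  For g = sech^k and
   g = sech^k ln(sech), rewriting g'' + g with tanh^2 = 1 - sech^2 gives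
     (k^2 + 1) p_k = k (k + 1) p_(k+2),
     (k^2 + 1) q_k + 2k p_k = k (k + 1) q_(k+2) + (2k + 1) p_(k+2),
   and the three identities follow from k = 1, 3, 5. *)

Section exponential_decay.
Context {R : realType}.
Notation mu := (@lebesgue_measure R).

Lemma is_derive_continuous (f f' : R -> R) :
  (forall x : R, is_derive x 1 f (f' x)) -> continuous f.
Proof.
move=> df x; apply/differentiable_continuous/derivable1_diffP.
by have [] := df x.
Qed.

(* Rate 1/2 leaves room for the factor |x| in sech x * ln (sech x). *)
Definition decay (x : R) := expR (- (`|x| / 2)).

Definition decaying (f : R -> R) :=
  continuous f /\ exists C, forall x, `|f x| <= C * decay x.

Lemma decay_ge0 x : 0 <= decay x. Proof. exact: expR_ge0. Qed.

Lemma decayN x : decay (- x) = decay x. Proof. by rewrite /decay normrN. Qed.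

Lemma continuous_decay : continuous decay.
Proof.
move=> x; apply: continuous_comp; last exact: continuous_expR.
apply: continuousN; apply: continuousM; last exact: cvg_cst.
exact: norm_continuous.
Qed.

Lemma decaying_decay : decaying decay.
Proof.
split; first exact: continuous_decay.
by exists 1 => x; rewrite mul1r ger0_norm ?decay_ge0.
Qed.

Lemma decayingD f g : decaying f -> decaying g -> decaying (fun x => f x + g x).
Proof.
move=> [cf [C fC]] [cg [D gD]].
split; first by move=> x; apply: cvgD; [exact: cf | exact: cg].
exists (C + D) => x; rewrite mulrDl.
by apply: le_trans (ler_normD _ _) _; apply: lerD.
Qed.

Lemma decayingZ (c : R) f : decaying f -> decaying (fun x => c * f x).
Proof.
move=> [cf [C fC]].
split; first by move=> x; apply: cvgM; [exact: cvg_cst | exact: cf].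
exists (`|c| * C) => x; rewrite normrM -mulrA.
by apply: ler_wpM2l => //; exact: normr_ge0.
Qed.

Lemma decayingN f : decaying f -> decaying (fun x => - f x).
Proof.
move=> /(decayingZ (-1)).
by congr decaying; apply/funext => x; rewrite mulN1r.
Qed.

Lemma decayingB f g : decaying f -> decaying g -> decaying (fun x => f x - g x).
Proof. by move=> df /decayingN; apply: decayingD. Qed.

Lemma decayingMr f b (M : R) : decaying f -> continuous b ->
  (forall x, `|b x| <= M) -> decaying (fun x => f x * b x).
Proof.
move=> [cf [C fC]] cb bM.
split; first by move=> x; apply: cvgM; [exact: cf | exact: cb].
exists (C * `|M|) => x; rewrite normrM mulrAC.
apply: ler_pM; rewrite ?normr_ge0 //.
exact: le_trans (bM x) (ler_norm M).
Qed.

Lemma cvgy_expNhalf : expR (- (x / 2)) @[x --> +oo] --> (0 : R).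
Proof.
apply: (cvg_comp (fun x : R => x / 2) (fun x => expR (- x))); last exact: cvgr_expR.
by apply/cvgryPge => A; near=> x; rewrite ler_pdivlMr.
Unshelve. all: by end_near.
Qed.

Lemma decaying_cvgy f : decaying f -> f x @[x --> +oo] --> 0.
Proof.
move=> [_ [C fC]].
have CE : C * expR (- (x / 2)) @[x --> +oo] --> 0.
  by rewrite -(mulr0 C); apply: cvgM; [exact: cvg_cst | exact: cvgy_expNhalf].
have NCE : - (C * expR (- (x / 2))) @[x --> +oo] --> 0.
  by rewrite -oppr0; exact: cvgN.
apply: squeeze_cvgr NCE CE; near=> x.
rewrite -ler_norml -[x in expR (- (x / 2))]gtr0_norm; first exact: fC.
by near: x; apply: nbhs_pinfty_gt.
Unshelve. all: by end_near.
Qed.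

Lemma is_derive_expNhalf (x : R) :
  is_derive x 1 (fun y : R => -2 * expR (- (y / 2))) (expR (- (x / 2))).
Proof.
have dlin : is_derive x 1 (fun y : R => - (y / 2)) (- 2^-1).
  have := is_deriveN (is_deriveM (is_derive_id x 1) (is_derive_cst (2^-1 : R) x 1)).
  move/is_derive_eq; apply.
  by rewrite /GRing.scale /= mulr0 add0r mulr1.
have := is_deriveM (is_derive_cst (-2 : R) x 1) (is_derive1_comp (is_derive_expR _) dlin).
move/is_derive_eq; apply.
by rewrite /GRing.scale /=; field.
Qed.

Lemma ge0_even_integral_FTC (f F : R -> R) (l : R) :
  (forall x, 0 <= f x) -> continuous f -> (forall x, f (- x) = f x) ->
  (forall x : R, 0 < x -> is_derive x 1 F (f x)) -> {for 0, continuous F} ->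
  F x @[x --> +oo] --> l ->
  (\int[mu]_x (f x)%:E = (2 * (l - F 0))%:E)%E.
Proof.
move=> f_ge0 cf fN dF cF Fl.
rewrite ge0_symfun_integralT //; last by move=> x /=; rewrite fN.
rewrite -set_itvcy (ge0_continuous_FTC2y (F := F) (l := l)) -?EFinB -?EFinM //.
- exact: continuous_subspaceT.
- by move=> x x0; have [] := dF x x0.
- exact: cvg_at_right_filter.
- move=> x; rewrite in_itv /= andbT => x0.
  by rewrite derive1E; have [_ ->] := dF x x0.
Qed.

Lemma integral_decay : (\int[mu]_x (decay x)%:E = 4%:E)%E.
Proof.
have dD (x : R) : 0 < x -> is_derive x 1 (fun y => -2 * expR (- (y / 2))) (decay x).
  by move=> x0; rewrite /decay gtr0_norm //; exact: is_derive_expNhalf.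
have Dy : -2 * expR (- (x / 2)) @[x --> +oo] --> (0 : R).
  by rewrite -(mulr0 (-2)); apply: cvgM; [exact: cvg_cst | exact: cvgy_expNhalf].
rewrite (ge0_even_integral_FTC decay_ge0 continuous_decay decayN dD
  (@is_derive_continuous _ _ is_derive_expNhalf 0) Dy).
by rewrite mul0r oppr0 expR0; congr EFin; lra.
Qed.

Lemma integrable_decay : mu.-integrable setT (EFin \o decay).
Proof.
apply/integrableP; split.
  by apply/measurable_EFinP; exact: continuous_measurable_fun continuous_decay.
have -> : (fun x => `|(EFin \o decay) x|%E) = (fun x => (decay x)%:E).
  by apply/funext => x /=; rewrite ger0_norm ?decay_ge0.
by rewrite integral_decay ltry.
Qed.

Lemma Rintegral_decay : \int[mu]_x decay x = 4.
Proof. by rewrite /Rintegral integral_decay. Qed.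

Lemma decaying_integrable f : decaying f -> mu.-integrable setT (EFin \o f).
Proof.
move=> [cf [C fC]].
have iC : mu.-integrable setT (EFin \o (fun x => C * decay x)).
  have := integrableZl measurableT C integrable_decay.
  by apply: eq_integrable measurableT _ _ _ => x _ /=; rewrite EFinM.
apply: (le_integrable measurableT _ _ iC).
- by apply/measurable_EFinP; exact: continuous_measurable_fun.
- by move=> x _ /=; rewrite lee_fin (le_trans (fC x)) // ler_norm.
Qed.

Lemma Rintegral_lincomb (a b : R) f g : decaying f -> decaying g ->
  \int[mu]_x (a * f x + b * g x) = a * \int[mu]_x f x + b * \int[mu]_x g x.
Proof.
move=> df dg.
rewrite RintegralD //; try exact/decaying_integrable/decayingZ.
by rewrite !RintegralZl //; exact: decaying_integrable.
Qed.

Lemma Rintegral_even_FTC (f F : R -> R) (l : R) :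
  decaying f -> (forall x, f (- x) = f x) ->
  (forall x : R, is_derive x 1 F (f x)) -> F x @[x --> +oo] --> l ->
  \int[mu]_x f x = 2 * (l - F 0).
Proof.
move=> df fN dF Fl; have [cf [C fC]] := df.
pose K := `|C|.
have dKdecay := decayingZ K decaying_decay.
(* The FTC on [0, +oo) is available for nonnegative integrands only, hence the
   shift by K * decay. *)
pose g x := f x + K * decay x.
have g_ge0 x : 0 <= g x.
  have : C * decay x <= K * decay x by rewrite ler_wpM2r ?decay_ge0 ?ler_norm.
  by have := fC x; rewrite ler_norml /g => /andP[+ _]; lra.
pose G x := F x + K * (-2 * expR (- (x / 2))).
have dG (x : R) : is_derive x 1 G (f x + K * expR (- (x / 2))).
  have := is_deriveD (dF x) (is_deriveM (is_derive_cst K x 1) (is_derive_expNhalf x)).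
  by move/is_derive_eq; apply; rewrite /GRing.scale /=; ring.
have dG' (x : R) : 0 < x -> is_derive x 1 G (g x).
  by move=> x0; rewrite /g /decay gtr0_norm.
have Gl : G x @[x --> +oo] --> l.
  rewrite -[l]addr0 -(mulr0 K) -(mulr0 (-2)).
  apply: cvgD => //; apply: cvgM; first exact: cvg_cst.
  by apply: cvgM; [exact: cvg_cst | exact: cvgy_expNhalf].
have [cg _] := decayingD df dKdecay.
have gN x : g (- x) = g x by rewrite /g fN decayN.
have Ig : (\int[mu]_x (g x)%:E = (2 * (l - F 0) + 4 * K)%:E)%E.
  rewrite (ge0_even_integral_FTC g_ge0 cg gN dG' (@is_derive_continuous _ _ dG 0) Gl).
  by rewrite /G mul0r oppr0 expR0; congr EFin; ring.
have -> : \int[mu]_x f x = \int[mu]_x (g x - K * decay x).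
  by apply: eq_Rintegral => x _; rewrite /g addrK.
have ig : mu.-integrable setT (EFin \o g) by exact/decaying_integrable/decayingD.
rewrite RintegralB // ?RintegralZl //; try exact: decaying_integrable.
  by rewrite Rintegral_decay /Rintegral Ig /=; ring.
exact: integrable_decay.
Qed.

Lemma Rintegral_cos_ode (u g g' : R -> R) :
  (forall x : R, is_derive x 1 g (g' x)) ->
  (forall x : R, is_derive x 1 g' (u x - g x)) ->
  decaying g -> decaying g' -> decaying u -> (forall x, u (- x) = u x) ->
  g' 0 = 0 -> \int[mu]_x (u x * cos x) = 0.
Proof.
move=> dg dg' decg decg' decu uN g'0.
pose F x := g' x * cos x + g x * sin x.
have dF (x : R) : is_derive x 1 F (u x * cos x).
  have := is_deriveD (is_deriveM (dg' x) (is_derive_cos x))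
    (is_deriveM (dg x) (is_derive_sin x)).
  by move/is_derive_eq; apply; rewrite /GRing.scale /=; ring.
have decF : decaying F.
  apply: decayingD.
    exact: decayingMr decg' (@continuous_cos R) (@cos_max R).
  exact: decayingMr decg (@continuous_sin R) (@sin_max R).
rewrite (Rintegral_even_FTC _ _ dF (decaying_cvgy decF)).
- by rewrite /F g'0 sin0 !mulr0 !mul0r addr0 subrr mulr0.
- exact: decayingMr decu (@continuous_cos R) (@cos_max R).
- by move=> x; rewrite uN cosN.
Qed.

End exponential_decay.

Section hyperbolic.
Context {R : realType}.
Implicit Types x : R.

Definition cosh x := (expR x + expR (- x)) / 2.
Definition sinh x := (expR x - expR (- x)) / 2.
Definition tanh x := sinh x / cosh x.

Lemma cosh_gt0 x : 0 < cosh x.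
Proof. by rewrite divr_gt0 // addr_gt0 // expR_gt0. Qed.

Lemma sechE x : sech x = (cosh x)^-1.
Proof. by rewrite /sech /cosh invf_div. Qed.

Lemma sech_gt0 x : 0 < sech x.
Proof. by rewrite sechE invr_gt0 cosh_gt0. Qed.

Lemma sechN x : sech (- x) = sech x.
Proof. by rewrite /sech opprK addrC. Qed.

Lemma tanh0 : tanh 0 = 0.
Proof. by rewrite /tanh /sinh oppr0 subrr !mul0r. Qed.

Lemma cosh_sqrB_sinh x : cosh x ^+ 2 - sinh x ^+ 2 = 1.
Proof.
have e0 : expR x != 0 by rewrite gt_eqF ?expR_gt0.
by rewrite /cosh /sinh expRN; field.
Qed.

Lemma tanh_sqr x : tanh x ^+ 2 = 1 - sech x ^+ 2.
Proof.
have c0 : cosh x != 0 by rewrite gt_eqF ?cosh_gt0.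
rewrite sechE /tanh expr_div_n.
have -> : sinh x ^+ 2 = cosh x ^+ 2 - 1 by rewrite -(cosh_sqrB_sinh x); ring.
by field.
Qed.

Lemma is_derive_expRN x : is_derive x 1 (fun y => expR (- y)) (- expR (- x)).
Proof.
have := @is_derive1_comp R expR -%R x (expR (- x)) (-1) _ _.
by rewrite mulrN1; apply.
Qed.

Lemma is_derive_cosh x : is_derive x 1 cosh (sinh x).
Proof.
have -> : cosh = (expR + (fun y => expR (- y))) * cst (2^-1 : R) by [].
have := is_deriveM (is_deriveD (is_derive_expR x) (is_derive_expRN x))
  (is_derive_cst (2^-1 : R) x 1).
by move/is_derive_eq; apply; rewrite /GRing.scale /= mulr0 add0r mulrC.
Qed.

Lemma is_derive_sinh x : is_derive x 1 sinh (cosh x).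
Proof.
have -> : sinh = (expR - (fun y => expR (- y))) * cst (2^-1 : R) by [].
have := is_deriveM (is_deriveB (is_derive_expR x) (is_derive_expRN x))
  (is_derive_cst (2^-1 : R) x 1).
by move/is_derive_eq; apply; rewrite /GRing.scale /= mulr0 add0r opprK mulrC.
Qed.

Lemma is_derive_sech x : is_derive x 1 (@sech R) (- (sech x * tanh x)).
Proof.
have c0 : cosh x != 0 by rewrite gt_eqF ?cosh_gt0.
have -> : @sech R = (fun y => (cosh y)^-1) by apply/funext => y; rewrite sechE.
have := is_deriveV c0 (is_derive_cosh x).
by move/is_derive_eq; apply; rewrite /GRing.scale /= /tanh; field.
Qed.

Lemma is_derive_tanh x : is_derive x 1 tanh (sech x ^+ 2).
Proof.
have c0 : cosh x != 0 by rewrite gt_eqF ?cosh_gt0.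
have -> : tanh = sinh * (fun y => (cosh y)^-1) by [].
have := is_deriveM (is_derive_sinh x) (is_deriveV c0 (is_derive_cosh x)).
move/is_derive_eq; apply.
have -> : sech x ^+ 2 = 1 - tanh x ^+ 2 by rewrite tanh_sqr; ring.
by rewrite /GRing.scale /= /tanh; field.
Qed.

Lemma is_derive_ln_sech x : is_derive x 1 (fun y => ln (sech y)) (- tanh x).
Proof.
have s0 : sech x != 0 by rewrite gt_eqF ?sech_gt0.
have := is_derive1_comp (is_derive1_ln (sech_gt0 x)) (is_derive_sech x).
by move/is_derive_eq; apply; field.
Qed.

Lemma is_derive_sechX k x :
  is_derive x 1 (fun y => sech y ^+ k) (- (k%:R * (sech x ^+ k * tanh x))).
Proof.
have := is_deriveX k (is_derive_sech x); rewrite exprfctE.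
move/is_derive_eq; apply; rewrite /GRing.scale /=.
by case: k => [|k]; rewrite ?exprS /=; ring.
Qed.

Lemma cosh_ge1 x : 1 <= cosh x.
Proof.
have := cosh_sqrB_sinh x; have := sqr_ge0 (sinh x).
by have := cosh_gt0 x; nra.
Qed.

Lemma sech_le1 x : sech x <= 1.
Proof. by rewrite sechE invf_le1 ?cosh_gt0 ?cosh_ge1. Qed.

Lemma tanh_norm_le1 x : `|tanh x| <= 1.
Proof.
rewrite -(expr_le1 (_ : 0 < 2)%N) // -normrX ger0_norm ?exprn_even_ge0 //.
by rewrite tanh_sqr; have := sqr_ge0 (sech x); lra.
Qed.

Lemma cosh_expR_norm x : expR `|x| / 2 <= cosh x <= expR `|x|.
Proof.
have -> : cosh x = (expR `|x| + expR (- `|x|)) / 2.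
  by case: ler0P => _; rewrite /cosh ?opprK // addrC.
have : expR (- `|x|) <= expR `|x| by rewrite ler_expR; have := normr_ge0 x; lra.
by have := expR_gt0 (- `|x|); lra.
Qed.

Lemma expNnorm_le_sech x : expR (- `|x|) <= sech x.
Proof.
have /andP[_ ch] := cosh_expR_norm x.
by rewrite sechE expRN lef_pV2 ?posrE ?expR_gt0 ?cosh_gt0.
Qed.

Lemma sech_le_expNnorm x : sech x <= 2 * expR (- `|x|).
Proof.
have /andP[ch _] := cosh_expR_norm x.
have -> : 2 * expR (- `|x|) = (expR `|x| / 2)^-1 by rewrite expRN invf_div mulrC.
by rewrite sechE lef_pV2 // posrE ?cosh_gt0 // divr_gt0 // expR_gt0.
Qed.

Lemma continuous_sech : continuous (@sech R).
Proof. exact: is_derive_continuous is_derive_sech. Qed.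

Lemma continuous_tanh : continuous tanh.
Proof. exact: is_derive_continuous is_derive_tanh. Qed.

Lemma continuous_ln_sech : continuous (fun x => ln (sech x)).
Proof. exact: is_derive_continuous is_derive_ln_sech. Qed.

Lemma decaying_sech : decaying (@sech R).
Proof.
split; first exact: continuous_sech.
exists 2 => x; rewrite ger0_norm ?(ltW (sech_gt0 x)) //.
apply: (le_trans (sech_le_expNnorm x)); rewrite ler_pM2l // ler_expR.
by have := normr_ge0 x; lra.
Qed.

Lemma decaying_sech_ln : decaying (fun x => sech x * ln (sech x)).
Proof.
split.
  by move=> x; apply: cvgM; [exact: continuous_sech | exact: continuous_ln_sech].
exists 4 => x; set a := `|x|; set D := decay x.
have lnge : - a <= ln (sech x).
  by rewrite -[- a]expRK ler_ln ?posrE ?expR_gt0 ?sech_gt0 ?expNnorm_le_sech.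
have lnle : ln (sech x) <= 0 := ln_le0 (sech_le1 x).
have DE : D * expR (a / 2) = 1 by rewrite /D /decay -/a expRN mulVf ?gt_eqF ?expR_gt0.
have E1 : 1 + a / 2 <= expR (a / 2) := expR_ge1Dx _.
have D0 : 0 < D := expR_gt0 _.
have aD : a * D <= 2 by nra.
have sD : sech x <= 2 * D ^+ 2.
  apply: (le_trans (sech_le_expNnorm x)); rewrite /D /decay -/a -expRM_natl.
  by rewrite (_ : 2%:R * - (a / 2) = - a) //; lra.
have s0 := sech_gt0 x.
rewrite normrM ger0_norm ?(ltW s0) // ler0_norm //.
have : sech x * - ln (sech x) <= sech x * a by rewrite ler_wpM2l ?(ltW s0) //; lra.
by have := normr_ge0 x; nra.
Qed.

Lemma sechX_norm_le1 k x : `|sech x ^+ k| <= 1.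
Proof.
have s0 := ltW (sech_gt0 x).
by rewrite normrX ger0_norm // exprn_ile1 ?sech_le1.
Qed.

Lemma continuous_sechX k : continuous (fun x => sech x ^+ k).
Proof. exact: is_derive_continuous (is_derive_sechX k). Qed.

Lemma decaying_sechX k : (0 < k)%N -> decaying (fun x => sech x ^+ k).
Proof.
case: k => // k _.
have -> : (fun x => sech x ^+ k.+1) = (fun x => sech x * sech x ^+ k).
  by apply/funext => x; rewrite exprS.
exact: decayingMr decaying_sech (@continuous_sechX k) (@sechX_norm_le1 k).
Qed.

Lemma decaying_sechX_ln k :
  (0 < k)%N -> decaying (fun x => sech x ^+ k * ln (sech x)).
Proof.
case: k => // k _.
have -> : (fun x => sech x ^+ k.+1 * ln (sech x)) =
          (fun x => sech x * ln (sech x) * sech x ^+ k).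
  by apply/funext => x; rewrite exprS; ring.
exact: decayingMr decaying_sech_ln (@continuous_sechX k) (@sechX_norm_le1 k).
Qed.

Lemma is_derive_sechX_ln k x : is_derive x 1 (fun y => sech y ^+ k * ln (sech y))
  (- (sech x ^+ k * tanh x) - k%:R * (sech x ^+ k * ln (sech x) * tanh x)).
Proof.
have := is_deriveM (is_derive_sechX k x) (is_derive_ln_sech x).
by move/is_derive_eq; apply; rewrite /GRing.scale /=; ring.
Qed.

Lemma sechX_tanh_sqr k x : sech x ^+ k * tanh x ^+ 2 = sech x ^+ k - sech x ^+ k.+2.
Proof. by rewrite tanh_sqr !exprS; ring. Qed.

Lemma is_derive_sechX_tanh k x : is_derive x 1 (fun y => sech y ^+ k * tanh y)
  (k.+1%:R * sech x ^+ k.+2 - k%:R * sech x ^+ k).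
Proof.
have := is_deriveM (is_derive_sechX k x) (is_derive_tanh x).
move/is_derive_eq; apply; rewrite /GRing.scale /=; apply/subr0_eq.
(* [ring] cannot use [tanh_sqr]: the difference is a multiple of it. *)
transitivity (- k%:R * (sech x ^+ k * tanh x ^+ 2 - (sech x ^+ k - sech x ^+ k.+2))).
  by rewrite !exprS; ring.
by rewrite sechX_tanh_sqr subrr mulr0.
Qed.


End hyperbolic.

Section sech_cos_integrals.
Context {R : realType}.
Notation mu := (@lebesgue_measure R).

Lemma decaying_sechX_cos k :
  (0 < k)%N -> decaying (fun x : R => sech x ^+ k * cos x).
Proof.
by move=> k0; exact: decayingMr (decaying_sechX k0) (@continuous_cos R) (@cos_max R).
Qed.

Lemma decaying_sechX_ln_cos k :
  (0 < k)%N -> decaying (fun x : R => sech x ^+ k * ln (sech x) * cos x).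
Proof.
move=> k0.
exact: decayingMr (decaying_sechX_ln k0) (@continuous_cos R) (@cos_max R).
Qed.

Lemma p_recurrence k : (0 < k)%N ->
  (k%:R ^+ 2 + 1) * p_ R k = k%:R * k.+1%:R * p_ R k.+2.
Proof.
move=> k0; set c : R := k%:R.
pose u x := (c ^+ 2 + 1) * sech x ^+ k - c * k.+1%:R * sech x ^+ k.+2.
pose g' x := - (c * (sech x ^+ k * tanh x)).
have dg' (x : R) : is_derive x 1 g' (u x - sech x ^+ k).
  have := is_deriveN (is_deriveM (is_derive_cst c x 1) (is_derive_sechX_tanh k x)).
  by move/is_derive_eq; apply; rewrite /GRing.scale /= /u; ring.
have decg' : decaying g'.
  apply/decayingN/decayingZ.
  exact: decayingMr (decaying_sechX k0) continuous_tanh tanh_norm_le1.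
have decu : decaying u.
  by apply: decayingB; apply: decayingZ; exact: decaying_sechX.
have uN x : u (- x) = u x by rewrite /u sechN.
have g'0 : g' 0 = 0 by rewrite /g' tanh0 !mulr0 oppr0.
have := Rintegral_cos_ode (@is_derive_sechX R k) dg' (decaying_sechX k0)
  decg' decu uN g'0.
have -> : \int[mu]_x (u x * cos x) =
    \int[mu]_x ((c ^+ 2 + 1) * (sech x ^+ k * cos x)
      + (- (c * k.+1%:R)) * (sech x ^+ k.+2 * cos x)).
  by apply: eq_Rintegral => x _; rewrite /u; ring.
rewrite Rintegral_lincomb; try exact: decaying_sechX_cos.
by rewrite /p_; lra.
Qed.

Lemma q_recurrence k : (0 < k)%N ->
  (k%:R ^+ 2 + 1) * q_ R k + 2 * k%:R * p_ R k =
  k%:R * k.+1%:R * q_ R k.+2 + (2 * k%:R + 1) * p_ R k.+2.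
Proof.
move=> k0; set c : R := k%:R.
pose L x := ln (@sech R x).
pose u x := (c ^+ 2 + 1) * (sech x ^+ k * L x)
  - c * k.+1%:R * (sech x ^+ k.+2 * L x)
  + (2 * c * sech x ^+ k - (2 * c + 1) * sech x ^+ k.+2).
pose g' x := - (sech x ^+ k * tanh x) - c * (sech x ^+ k * L x * tanh x).
have dg := @is_derive_sechX_ln R k.
have dg' (x : R) : is_derive x 1 g' (u x - sech x ^+ k * L x).
  have := is_deriveB (is_deriveN (is_derive_sechX_tanh k x))
    (is_deriveM (is_derive_cst c x 1) (is_deriveM (dg x) (is_derive_tanh x))).
  move/is_derive_eq; apply; rewrite /GRing.scale /= /u /g' /L; apply/subr0_eq.
  transitivity (c * (1 + c * ln (sech x))
    * (sech x ^+ k * tanh x ^+ 2 - (sech x ^+ k - sech x ^+ k.+2))).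
    by rewrite !exprS; ring.
  by rewrite sechX_tanh_sqr subrr mulr0.
have decg' : decaying g'.
  apply: decayingB; first apply: decayingN.
    exact: decayingMr (decaying_sechX k0) continuous_tanh tanh_norm_le1.
  apply: decayingZ.
  exact: decayingMr (decaying_sechX_ln k0) continuous_tanh tanh_norm_le1.
have decu : decaying u.
  apply: decayingD; apply: decayingB; apply: decayingZ;
    by [exact: decaying_sechX_ln | exact: decaying_sechX].
have uN x : u (- x) = u x by rewrite /u /L sechN.
have g'0 : g' 0 = 0 by rewrite /g' tanh0 !mulr0 oppr0 addr0.
have := Rintegral_cos_ode dg dg' (decaying_sechX_ln k0) decg' decu uN g'0.
have -> : \int[mu]_x (u x * cos x) =
    \int[mu]_x ((c ^+ 2 + 1) * (sech x ^+ k * ln (sech x) * cos x)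
      + (- (c * k.+1%:R)) * (sech x ^+ k.+2 * ln (sech x) * cos x)
    + (2 * c * (sech x ^+ k * cos x)
      + (- (2 * c + 1)) * (sech x ^+ k.+2 * cos x))).
  by apply: eq_Rintegral => x _; rewrite /u /L; ring.
rewrite RintegralD //; try by apply: decaying_integrable; apply: decayingD;
  apply: decayingZ; by [exact: decaying_sechX_ln_cos | exact: decaying_sechX_cos].
rewrite !Rintegral_lincomb;
  try by [exact: decaying_sechX_ln_cos | exact: decaying_sechX_cos].
by rewrite /p_ /q_; lra.
Qed.

End sech_cos_integrals.

Theorem lemma3p2 (R : realType) :
  [/\ q_ R 3 = q_ R 1 - 2^-1 * p_ R 1,
      q_ R 5 = 5 / 6 * q_ R 1 - 29 / 72 * p_ R 1
    & q_ R 7 = 13 / 18 * q_ R 1 - 121 / 360 * p_ R 1].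
Proof.
have p1 := @p_recurrence R 1 erefl; have p3 := @p_recurrence R 3 erefl.
have p5 := @p_recurrence R 5 erefl; have q1 := @q_recurrence R 1 erefl.
have q3 := @q_recurrence R 3 erefl; have q5 := @q_recurrence R 5 erefl.
by split; lra.
Qed.
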